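(* Let $\Sigma$ be a finite set and $n\geq 1$. Every nonempty subset $C\subseteq\Sigma^n$ satisfying property (A) has cardinality at least $2^n$.
   Context: A set $M\subseteq\Sigma^n$ satisfies property (A) if for every element $\bar x\in M$ and every position $i\in\{1,\dots,n\}$ there exists another element $\bar y\in M$, $\bar y\neq\bar x$, that differs from $\bar x$ only in position $i$. *)

From mathcomp Require Import all_boot.
Set Implicit Arguments. Unset Strict Implicit. Unset Printing Implicit Defensive.

(* Words of length n over Sigma: Sigma^n = {ffun 'I_n -> Sigma}; positions 1..n
   are represented by 'I_n = {0,...,n-1}. *)

(* y differs from x only in position i (possibly also equal; distinctness is
   required separately). *)
Definition differ_only_at (Sigma : finType) (n : nat) (i : 'I_n)
  (x y : {ffun 'I_n -> Sigma}) : Prop :=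
  forall j : 'I_n, j != i -> y j = x j.

Definition propertyA (Sigma : finType) (n : nat) (M : {set {ffun 'I_n -> Sigma}}) : Prop :=
  forall x, x \in M -> forall i : 'I_n,
    exists y, [/\ y \in M, y != x & differ_only_at i x y].

From mathcomp Require Import all_boot.

Set Implicit Arguments.
Unset Strict Implicit.
Unset Printing Implicit Defensive.

(* Induction on the number of positions: pick a position i and a word x of C,
   and a neighbour y of x differing exactly at i.  The words of C carrying the
   letter x i at position i, and those carrying y i, are two disjoint nonempty
   subsets of C that still satisfy property (A) at every other position, so
   each has at least 2^(n-1) elements. *)

Definition propertyA_on (Sigma : finType) (n : nat) (S : {set 'I_n})
    (M : {set {ffun 'I_n -> Sigma}}) : Prop :=
  forall x, x \in M -> forall i, i \in S ->
    exists y, [/\ y \in M, y != x & differ_only_at i x y].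

Section PropertyA.

Variables (Sigma : finType) (n : nat).
Implicit Types (S : {set 'I_n}) (M : {set {ffun 'I_n -> Sigma}}).
Implicit Types (x y : {ffun 'I_n -> Sigma}).

Lemma differ_only_at_neq i x y :
  differ_only_at i x y -> y != x -> y i != x i.
Proof.
move=> dxy; apply: contra => /eqP yxi; apply/eqP/ffunP => j.
by case: (eqVneq j i) => [->|/dxy].
Qed.

Lemma propertyA_on_fiber S M i a :
  propertyA_on S M -> propertyA_on (S :\ i) [set z in M | z i == a].
Proof.
move=> AM z; rewrite inE => /andP[zM /eqP zia] j; rewrite !inE => /andP[ji jS].
have [w [wM wz dzw]] := AM z zM j jS.
exists w; split=> //.
by rewrite inE wM dzw 1?eq_sym // zia eqxx.
Qed.

Lemma propertyA_on_card S M :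
  M != set0 -> propertyA_on S M -> 2 ^ #|S| <= #|M|.
Proof.
move cardS: #|S| => k; elim: k S M cardS => [|k IH] S M cardS.
  by rewrite expn0 card_gt0.
move=> /set0Pn[x xM] AM.
have /card_gt0P[i iS] : 0 < #|S| by rewrite cardS.
have [y [yM yx dxy]] := AM x xM i iS.
have cardSi : #|S :\ i| = k by move: cardS; rewrite (cardsD1 i S) iS => -[].
pose fiber a := [set z in M | z i == a].
have fiber_big a z : z \in M -> z i = a -> 2 ^ k <= #|fiber a|.
  move=> zM zia; apply: (IH _ _ cardSi); last exact: propertyA_on_fiber.
  by apply/set0Pn; exists z; rewrite inE zM zia eqxx.
have fibers_disjoint : [disjoint fiber (x i) & fiber (y i)].
  rewrite -setI_eq0; apply/eqP/setP => z; rewrite !inE.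
  case: (z \in M) => //=; apply/negP => /andP[/eqP -> /eqP xyi].
  by case/negP: (differ_only_at_neq dxy yx); rewrite xyi.
have fibersM : fiber (x i) :|: fiber (y i) \subset M.
  by apply/subsetP => z; rewrite !inE => /orP[] /andP[].
rewrite expnS mul2n -addnn; apply: leq_trans (subset_leq_card fibersM).
rewrite cardsU (disjoint_setI0 fibers_disjoint) cards0 subn0.
by apply: leq_add; [apply: (fiber_big _ x) | apply: (fiber_big _ y)].
Qed.

End PropertyA.

Theorem proposition1 (Sigma : finType) (n : nat) (C : {set {ffun 'I_n -> Sigma}}) :
  1 <= n -> C != set0 -> propertyA C -> 2 ^ n <= #|C|.
Proof.
move=> _ C_neq0 AC.
rewrite -[n in 2 ^ n]card_ord -cardsT; apply: propertyA_on_card => // x xC i _.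
exact: AC.
Qed.
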